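(* Let $d\ge 2$ and let $\varphi:[0,\infty)\to[0,1]$ be the Laplace transform of a strictly positive random variable, continuous and strictly decreasing with $\varphi(0)=1$ and $\lim_{t\to\infty}\varphi(t)=0$, and let $C(u_1,\dots,u_d)=\varphi\big(\sum_{i=1}^d\varphi^{-1}(u_i)\big)$ be the associated Archimedean copula. If $\varphi$ is slowly varying at $\infty$, then for every $w=(w_1,\dots,w_d)\in\mathbb{R}_+^d$, $$\lim_{u\downarrow 0}\frac{C(uw_1,\dots,uw_d)}{u}=\min\{w_1,\dots,w_d\}.$$
   Context: A measurable function $f>0$ is slowly varying at $\infty$ if $f(tx)/f(t)\to 1$ as $t\to\infty$ for every $x>0$. *)

From HB Require Import structures.
From mathcomp Require Import all_boot all_order all_algebra.
From mathcomp Require Import all_classical all_reals all_analysis.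
Set Implicit Arguments. Unset Strict Implicit. Unset Printing Implicit Defensive.
Import Order.TTheory GRing.Theory Num.Theory.
Import numFieldNormedType.Exports.
Local Open Scope classical_set_scope.
Local Open Scope ring_scope.

Definition laplace {R : realType} (P : probability R R) (t : R) : R :=
  fine (\int[P]_x (expR (- (t * x)))%:E)%E.

Definition slowly_varying {R : realType} (f : R -> R) : Prop :=
  [/\ measurable_fun (`]0, +oo[ : set R) f,
      (forall t, 0 < t -> 0 < f t) &
      forall x, 0 < x -> f (t * x) / f t @[t --> +oo] --> (1 : R)].

(* generalized inverse of phi on [0,1]: inf {t >= 0 | phi t <= u},
   valued in the extended reals (= +oo when u = 0, the usual convention) *)
Definition phi_inv {R : realType} (phi : R -> R) (u : R) : \bar R :=
  ereal_inf [set t%:E | t in [set t : R | 0 <= t /\ phi t <= u]].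

(* phi extended to [0, +oo] with phi(+oo) = lim phi = 0 *)
Definition phi_ext {R : realType} (phi : R -> R) (e : \bar R) : R :=
  match e with
  | r%:E => phi r
  | +oo%E => 0
  | -oo%E => 1
  end.

Definition arch_copula {R : realType} (phi : R -> R) (d : nat)
    (u : 'I_d -> R) : R :=
  phi_ext phi (\sum_(i < d) phi_inv phi (u i))%E.

(* min{w_1,...,w_d} (for d >= 1) *)
Definition minv {R : realType} (d : nat) (w : 'I_d -> R) : R :=
  fine (\big[mine/+oo%E]_(i < d) (w i)%:E)%E.

From HB Require Import structures.
From mathcomp Require Import all_boot all_order all_algebra.
From mathcomp Require Import all_classical all_reals all_analysis.
From mathcomp Require Import ring.
Import Order.TTheory GRing.Theory Num.Theory.
Import numFieldNormedType.Exports.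
Local Open Scope classical_set_scope.
Local Open Scope ring_scope.
Set Implicit Arguments. Unset Strict Implicit.

(* Write [u w_i = phi (t_i)], so that [C(u w) = phi (t_1 + ... + t_d)]; the
   largest [t_j] belongs to the smallest weight [m = w_j], and
   [t_j <= sum_i t_i <= d t_j].  Since [phi] decreases,
   [phi (d t_j) <= C(u w) <= phi (t_j) = u m], i.e.
   [m phi (d t_j) / phi (t_j) <= C(u w) / u <= m].  As [u -> 0], [t_j -> +oo],
   and slow variation at [x = d] squeezes [C(u w) / u] to [m]. *)

Lemma minv_attained (R : realType) (d : nat) (w : 'I_d -> R) (i0 : 'I_d) :
  exists2 j, minv w = w j & forall i, w j <= w i.
Proof.
rewrite /minv (@bigmin_eq_arg _ _ _ +oo%E i0 predT (fun i => (w i)%:E)) //;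
  last by move=> i _; exact: leey.
case: arg_minP => // j _ wj_min; exists j => // i.
by have := wj_min i isT; rewrite lee_fin.
Qed.

Lemma cvg_at_right0_scale (R : realType) (c : R) : 0 < c ->
  (fun u => u * c) @ 0^'+ --> 0^'+.
Proof.
move=> c0 A [e /= e0 eA]; exists (e / c) => [|u /= ue u0]; first exact: divr_gt0.
apply: eA => /=; last exact: mulr_gt0.
move: ue; rewrite !sub0r !normrN !gtr0_norm ?mulr_gt0 //.
by rewrite ltr_pdivlMr.
Qed.

Definition phi_invr (R : realType) (phi : R -> R) (v : R) : R :=
  fine (phi_inv phi v).

Section GeneralizedInverse.
Variables (R : realType) (phi : R -> R).

Lemma phi_inv_ge0 v : (0 <= phi_inv phi v)%E.
Proof. by apply: le_ereal_inf_tmp => _ [t [t0 _] <-]; rewrite lee_fin. Qed.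

Hypothesis phi_decr :
  {in `[0, +oo[ &, forall s t, s < t -> phi t < phi s}.

Lemma phi_le s t : 0 <= s -> 0 <= t -> (phi t <= phi s) = (s <= t).
Proof.
move=> s0 t0.
have phi_nmono : {in `[0, +oo[ &, {homo phi : y x / x < y >-> y < x}}.
  by move=> y x yD xD; exact: phi_decr.
by rewrite (le_nmono_in phi_nmono) // in_itv /= andbT.
Qed.

Lemma phiK t : 0 <= t -> phi_inv phi (phi t) = t%:E.
Proof.
move=> t0; apply/le_anti/andP; split.
  by apply: ereal_inf_lbound; exists t.
apply: le_ereal_inf_tmp => _ [s [s0 phi_s] <-].
by rewrite lee_fin -phi_le.
Qed.

Hypotheses (phi_pos : forall t, 0 < t -> 0 < phi t) (phi0 : phi 0 = 1).

Lemma phi_inv0 : phi_inv phi 0 = +oo%E.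
Proof.
rewrite /phi_inv; suff -> : [set t%:E | t in [set t | 0 <= t /\ phi t <= 0]] = set0
  by exact: ereal_inf0.
apply/seteqP; split => // _ [t [] + phi_t _] /=.
rewrite le_eqVlt => /predU1P[t0|/phi_pos]; first by rewrite -t0 phi0 ler10 in phi_t.
by rewrite ltNge phi_t.
Qed.

Lemma arch_copula_eq0 d (u : 'I_d -> R) j : u j = 0 -> arch_copula phi u = 0.
Proof.
move=> uj0; rewrite /arch_copula (bigD1 j) //= uj0 phi_inv0 addye //.
by rewrite gt_eqF // (lt_le_trans ltNy0) // sume_ge0 // => i _; exact: phi_inv_ge0.
Qed.

Lemma arch_copula_phi d (t : 'I_d -> R) : (forall i, 0 <= t i) ->
  arch_copula phi (fun i => phi (t i)) = phi (\sum_i t i).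
Proof.
by move=> t0; rewrite /arch_copula (eq_bigr _ (fun i _ => phiK (t0 i))) sumEFin.
Qed.

Lemma arch_copula_bounds d (t : 'I_d -> R) j :
  (forall i, 0 <= t i) -> (forall i, t i <= t j) ->
  phi (t j * d%:R) <= arch_copula phi (fun i => phi (t i)) <= phi (t j).
Proof.
move=> t0 t_max; rewrite arch_copula_phi //.
have sum_ge : t j <= \sum_i t i.
  by rewrite (bigD1 j) //= lerDl sumr_ge0.
have sum_le : \sum_i t i <= t j * d%:R.
  apply: le_trans (ler_sum _ (fun i _ => t_max i)) _.
  by rewrite sumr_const card_ord mulr_natr.
have sum0 := le_trans (t0 j) sum_ge.
by rewrite !phi_le ?mulr_ge0 ?ler0n // sum_ge sum_le.
Qed.

Hypotheses (phi_cont : {within `[0, +oo[, continuous phi})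
  (phi_cvg0 : phi t @[t --> +oo] --> 0).

Lemma phi_onto v : 0 < v -> v <= 1 -> exists2 t, 0 <= t & phi t = v.
Proof.
move=> v0 v1; have [M [_ phi_lt]] := cvgr_lt 0 phi_cvg0 v v0.
pose T := Num.max M 0 + 1.
have T0 : 0 <= T by rewrite addr_ge0 // le_max lexx orbT.
have phiT : phi T < v by apply: phi_lt; rewrite ltr_pwDr // le_max lexx.
have phiT1 : phi T <= 1 := ltW (lt_le_trans phiT v1).
have [t + phi_t] : exists2 t, t \in `[0, T] & phi t = v.
  apply: IVT => //.
    apply: continuous_subspaceW phi_cont => x /=.
    by rewrite !in_itv /= => /andP[-> _].
  by rewrite phi0 (min_r phiT1) (max_l phiT1) (ltW phiT) v1.
by rewrite in_itv /= => /andP[t0 _]; exists t.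
Qed.

Lemma phi_invrK v :
  0 < v -> v <= 1 -> 0 <= phi_invr phi v /\ phi (phi_invr phi v) = v.
Proof.
by move=> v0 v1; have [t t0 <-] := phi_onto v0 v1; rewrite /phi_invr phiK.
Qed.

Lemma phi_invr_cvgy : phi_invr phi v @[v --> 0^'+] --> +oo.
Proof.
apply/cvgryPge => A; pose B := Num.max A 0 + 1.
have B0 : 0 < B by rewrite ltr_pwDr // le_max lexx orbT.
have phiB0 := phi_pos B0.
have phiB1 : phi B <= 1 by rewrite -phi0 phi_le // ltW.
near=> v.
have v0 : 0 < v by near: v; exact: nbhs_right_gt.
have vB : v < phi B by near: v; exact: nbhs_right_lt.
have [r0 phi_r] := phi_invrK v0 (ltW (lt_le_trans vB phiB1)).
apply: (@le_trans _ _ B); first by rewrite ler_wpDr // le_max lexx.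
by rewrite -(phi_le (ltW B0) r0) phi_r ltW.
Unshelve. all: by end_near.
Qed.

Lemma arch_copula_ratio_bounds d (w : 'I_d -> R) j u :
  0 < u -> 0 < w j -> (forall i, w j <= w i) -> (forall i, u * w i <= 1) ->
  w j * (phi (phi_invr phi (u * w j) * d%:R) / phi (phi_invr phi (u * w j)))
    <= arch_copula phi (fun i => u * w i) / u <= w j.
Proof.
move=> u0 wj0 w_min w_le1.
have t_spec i := phi_invrK (mulr_gt0 u0 (lt_le_trans wj0 (w_min i))) (w_le1 i).
pose t i := phi_invr phi (u * w i).
have -> : (fun i => u * w i) = fun i => phi (t i).
  by apply/funext => i; rewrite (t_spec i).2.
have t_max i : t i <= t j.
  rewrite -(phi_le (t_spec i).1 (t_spec j).1).
  by rewrite (t_spec i).2 (t_spec j).2 ler_pM2l.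
have /andP[lb ub] := arch_copula_bounds (fun i => (t_spec i).1) t_max.
apply/andP; split; last by rewrite ler_pdivrMr // mulrC -(t_spec j).2.
have -> : w j * (phi (t j * d%:R) / phi (t j)) = phi (t j * d%:R) / u.
  by rewrite (t_spec j).2; field; rewrite !gt_eqF.
by rewrite ler_wpM2r // invr_ge0 ltW.
Qed.

End GeneralizedInverse.

Theorem theorem2p3 (R : realType) (d : nat) (P : probability R R) :
  (2 <= d)%N ->
  P `]0, +oo[%classic = 1%E ->
  {within `[0, +oo[, continuous (laplace P)} ->
  {in `[0, +oo[ &, forall s t, s < t -> laplace P t < laplace P s} ->
  laplace P 0 = 1 ->
  laplace P t @[t --> +oo] --> 0 ->
  slowly_varying (laplace P) ->
  forall w : 'I_d -> R, (forall i, 0 <= w i) ->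
    (fun u => arch_copula (laplace P) (fun i => u * w i) / u) @ 0^'+
      --> minv w.
Proof.
move=> d2 _ phi_cont phi_decr phi0 phi_cvg0 [_ phi_pos phi_sv] w w_ge0.
have [j -> w_min] := minv_attained w (Ordinal (ltnW d2)).
have := w_ge0 j; rewrite le_eqVlt => /predU1P[wj0|wj_pos].
  apply: cvg_near_cst; apply: nearW => u.
  by rewrite (arch_copula_eq0 phi_pos phi0 (j := j)) ?mul0r // -wj0 mulr0.
pose phi := laplace P; pose g u := phi_invr phi (u * w j).
have g_cvgy : g u @[u --> 0^'+] --> +oo.
  apply: cvg_comp (cvg_at_right0_scale wj_pos) _.
  exact: phi_invr_cvgy phi_decr phi_pos phi0 phi_cont phi_cvg0.
have ratio_cvg1 : phi (g u * d%:R) / phi (g u) @[u --> 0^'+] --> (1 : R).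
  by apply: cvg_comp g_cvgy (phi_sv _ _); rewrite ltr0n (ltnW d2).
have lower_cvg : w j * (phi (g u * d%:R) / phi (g u)) @[u --> 0^'+] --> w j.
  by rewrite -[X in _ --> X]mulr1; apply: cvgM => //; exact: cvg_cst.
apply: (squeeze_cvgr _ lower_cvg (cvg_cst (w j))).
pose W := \sum_i w i.
have w_le_W i : w i <= W by rewrite /W (bigD1 i) //= lerDl sumr_ge0.
have W_pos := lt_le_trans wj_pos (w_le_W j).
near=> u.
have u0 : 0 < u by near: u; exact: nbhs_right_gt.
have uW : u < W^-1 by near: u; apply: nbhs_right_lt; rewrite invr_gt0.
apply: (arch_copula_ratio_bounds phi_decr phi0 phi_cont phi_cvg0 u0 wj_pos w_min).
move=> i; rewrite -(mulVf (lt0r_neq0 W_pos)).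
by apply: ler_pM; [exact: ltW | exact: w_ge0 | exact: ltW | exact: w_le_W].
Unshelve. all: by end_near.
Qed.
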